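(* Let $d\ge0$ and $n>d$ be integers, let $T\in L(n,d)$, let $T_1\in T$, and let $T'=T\setminus\{T_1\}$. Then $\mathcal{I}_{n,d}(\{T_1\})\times\mathcal{I}_{n,d}(T')$ and $\mathcal{I}_{n,d}(T)$ are isomorphic as posets.
   Context: For a finite set $X$ let $\operatorname{codim}_d(X)=d+1-|X|$. For a finite collection $\{T_1,\dots,T_l\}$ of pairwise distinct finite sets put $\rho_d(\{T_1,\dots,T_l\})=\sum_{i=1}^l\operatorname{codim}_d(T_i)$ (with $\rho_d(\emptyset)=0$) and $D_d(\{T_1,\dots,T_l\})=\operatorname{codim}_d(T_1\cap\cdots\cap T_l)-\rho_d(\{T_1,\dots,T_l\})$. For integers $d\ge0$, $n>d$, $L(n,d)$ is the set of all collections $T$ of subsets of $\{1,\dots,n\}$ such that (i) $D_d(T')>0$ for every $T'\subset T$ with $|T'|>1$, and (ii) $0\le|T_i|\le d$ for every $T_i\in T$. It is partially ordered by: $T<T'$ iff $\rho_d(T)<\rho_d(T')$ and for every $T_i\in T$ there exists $T'_j\in T'$ with $T'_j\subset T_i$; $T\le T'$ means $T<T'$ or $T=T'$. For $T\in L(n,d)$, $\mathcal{I}_{n,d}(T)=\{S\in L(n,d): S\le T\}$ with the induced order; products of posets carry the componentwise order. *)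

From HB Require Import structures.
From mathcomp Require Import all_boot all_order all_algebra.
Unset Printing Implicit Defensive.
Import GRing.Theory Num.Theory.
Local Open Scope ring_scope.

(* Ground set {1,...,n} is modelled by 'I_n = {0,...,n-1}. *)

Definition codim (d : nat) {n : nat} (X : {set 'I_n}) : int :=
  (d.+1)%:Z - (#|X|)%:Z.

Definition rho (d : nat) {n : nat} (T : {set {set 'I_n}}) : int :=
  \sum_(X in T) codim d X.

Definition Dd (d : nat) {n : nat} (T : {set {set 'I_n}}) : int :=
  codim d (\bigcap_(X in T) X) - rho d T.

Definition inL (n d : nat) (T : {set {set 'I_n}}) : bool :=
  [forall T' : {set {set 'I_n}},
     ((T' \subset T) && (1 < #|T'|)%N) ==> (0 < Dd d T')]
  && [forall X in T, (#|X| <= d)%N].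

Definition ltL (d : nat) {n : nat} (T T' : {set {set 'I_n}}) : bool :=
  (rho d T < rho d T') &&
  [forall X in T, exists Y in T', Y \subset X].

Definition leL (d : nat) {n : nat} (T T' : {set {set 'I_n}}) : bool :=
  ltL d T T' || (T == T').

Definition Iset (n d : nat) (T : {set {set 'I_n}}) : {set {set {set 'I_n}}} :=
  [set S | inL n d S && leL d S T].

Definition poset_iso {aT bT : finType} (A : {set aT}) (leA : rel aT)
    (B : {set bT}) (leB : rel bT) : Prop :=
  exists (f : aT -> bT) (g : bT -> aT),
    [/\ {in A, forall x, f x \in B},
        {in B, forall y, g y \in A},
        {in A, cancel f g},
        {in B, cancel g f} &
        {in A &, forall x y, leA x y = leB (f x) (f y)}].

Definition prod_rel {aT bT : Type} (r1 : rel aT) (r2 : rel bT) : rel (aT * bT) :=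
  fun p q => r1 p.1 q.1 && r2 p.2 q.2.

From mathcomp Require Import all_boot all_order all_algebra.
From mathcomp Require Import zify.
Import Order.TTheory GRing.Theory Num.Theory.
Local Open Scope ring_scope.

(* For S, T in L(n,d), S <= T holds iff every member of S contains a member
   of T.  That member is unique, since two distinct Y, Y' of T inside X with
   |X| <= d would give D_d({Y, Y'}) = |Y :|: Y'| - (d + 1) <= 0; so S falls into
   fibers over the members Y of T, and the fiber over Y has rho at most
   codim Y, with equality only if it is {Y}.  Hence the elements below T are
   the unions S1 :|: S2 of an element below {T1} and an element below T :\ T1,
   and S is split back by sorting its members by whether they contain T1.  That
   such a union lies in L(n,d) again follows by grouping a subfamily into
   fibers, because enlarging the members of a family can only increase D_d. *)

Lemma card_bigcup_le {I T : finType} (A : {set I}) (G : I -> {set T}) :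
  (#|\bigcup_(i in A) G i| <= \sum_(i in A) #|G i|)%N.
Proof.
apply: (big_ind2 (fun (B : {set T}) m => #|B| <= m)%N) => [|B b C c sBb sCc|//].
  by rewrite cards0.
exact: leq_trans (leq_card_setU B C).1 (leq_add sBb sCc).
Qed.

Section Codimension.
Context {n d : nat}.
Local Notation sT := {set 'I_n}.
Local Notation cT := {set {set 'I_n}}.
Local Notation codim := (@codim d n).

Definition refines (S R : cT) : Prop :=
  forall X, X \in S -> exists2 Y, Y \in R & Y \subset X.

Definition below_unique (S R : cT) : Prop :=
  forall X Y Y', X \in S -> Y \in R -> Y' \in R ->
    Y \subset X -> Y' \subset X -> Y = Y'.

Definition fiber (S : cT) (Y : sT) : cT := [set X in S | Y \subset X].

Definition cofiber (S : cT) (Y : sT) : cT := [set X in S | ~~ (Y \subset X)].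

Lemma fiber_setU_cofiber (S : cT) (Y : sT) : fiber S Y :|: cofiber S Y = S.
Proof. by apply/setP => X; rewrite !inE; case: (X \in S); case: (Y \subset X). Qed.

Lemma fiberS {S U : cT} (Y : sT) : S \subset U -> fiber S Y \subset fiber U Y.
Proof.
by move=> sSU; apply/subsetP => X; rewrite !inE => /andP[/(subsetP sSU) -> ->].
Qed.

Lemma fiber_subset (S : cT) (Y : sT) : fiber S Y \subset S.
Proof. by apply/subsetP => X; rewrite inE => /andP[]. Qed.

Lemma codim_le {X Y : sT} : Y \subset X -> codim X <= codim Y.
Proof. by move=> /subset_leq_card; rewrite /codim; lia. Qed.

Lemma inL_subset {T S : cT} : inL n d T -> S \subset T -> inL n d S.
Proof.
case/andP=> /forallP DT /forall_inP cardT sST; apply/andP; split.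
  apply/forallP=> S'; apply/implyP=> /andP[sS'S S'gt1]; have := DT S'.
  by rewrite (subset_trans sS'S sST) S'gt1.
by apply/forall_inP=> X /(subsetP sST); apply: cardT.
Qed.

Lemma Iset_inL {R S : cT} : S \in Iset n d R -> inL n d S.
Proof. by rewrite inE => /andP[]. Qed.

Lemma inL_card_le {T : cT} {X : sT} : inL n d T -> X \in T -> (#|X| <= d)%N.
Proof. by case/andP=> _ /forall_inP; apply. Qed.

Lemma inL_Dd_gt0 {T S : cT} :
  inL n d T -> S \subset T -> (1 < #|S|)%N -> 0 < Dd d S.
Proof. by case/andP=> /forallP DT _ sST S_gt1; have := DT S; rewrite sST S_gt1. Qed.

Lemma inL_below_unique {T : cT} {X Y Y' : sT} : inL n d T ->
  Y \in T -> Y' \in T -> Y \subset X -> Y' \subset X -> (#|X| <= d)%N -> Y = Y'.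
Proof.
move=> LT YT Y'T sYX sY'X cardX; have [//|neqYY'] := eqVneq Y Y'; exfalso.
have sYY'T : [set Y; Y'] \subset T by apply/subsetP=> Z; rewrite !inE => /orP[]/eqP->.
have := inL_Dd_gt0 LT sYY'T; rewrite cards2 neqYY' => /(_ isT); rewrite /Dd.
have -> : rho d [set Y; Y'] = codim Y + codim Y'.
  by rewrite /rho big_setU1 ?inE // big_set1.
have -> : \bigcap_(Z in [set Y; Y']) Z = Y :&: Y'.
  by rewrite big_setU1 ?inE // big_set1.
rewrite /codim.
have := cardsUI Y Y'.
have : (#|Y :|: Y'| <= #|X|)%N by apply: subset_leq_card; rewrite subUset sYX sY'X.
lia.
Qed.

Lemma inL_below_unique_sub {T R S : cT} : inL n d T -> R \subset T ->
  {in S, forall X : sT, (#|X| <= d)%N} -> below_unique S R.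
Proof.
move=> LT sRT cardS X Y Y' XS YR Y'R sYX sY'X.
exact: inL_below_unique LT (subsetP sRT _ YR) (subsetP sRT _ Y'R) sYX sY'X (cardS X XS).
Qed.

Lemma rho_lt_codim_bigcap {F : cT} :
  inL n d F -> (1 < #|F|)%N -> rho d F < codim (\bigcap_(X in F) X).
Proof. by move=> LF F_gt1; rewrite -subr_gt0; apply: inL_Dd_gt0 LF (subxx F) F_gt1. Qed.

Lemma rho_le_codim_bigcap {F : cT} :
  inL n d F -> F != set0 -> rho d F <= codim (\bigcap_(X in F) X).
Proof.
move=> LF F0; have [F_gt1|F_le1] := ltnP 1 #|F|.
  exact/ltW/rho_lt_codim_bigcap.
have /cards1P[X ->] : #|F| == 1%N by move: F0; rewrite -card_gt0; lia.
by rewrite /rho !big_set1.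
Qed.

Lemma rho_fibers {S K : cT} : refines S K -> below_unique S K ->
  rho d S = \sum_(Y in K) rho d (fiber S Y).
Proof.
move=> SK uniqK.
transitivity (\sum_(Y in K) \sum_(X in S | Y \subset X) codim X); last first.
  by apply: eq_bigr => Y _; apply: eq_bigl => X; rewrite inE.
rewrite (exchange_big_dep (mem S)) /=; last by move=> Y X _ /andP[].
apply: eq_bigr => X XS; have [Y0 Y0K sY0X] := SK X XS.
rewrite (big_pred1 Y0) // => Y /=; rewrite XS /=; apply/idP/eqP.
  by case/andP=> YK sYX; apply: uniqK XS YK Y0K sYX sY0X.
by move=> ->; rewrite Y0K sY0X.
Qed.

Lemma rho_fiber_le {S T : cT} {Y : sT} : inL n d S -> inL n d T -> Y \in T ->
  rho d (fiber S Y) <= codim Y.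
Proof.
move=> LS LT YT; have LF := inL_subset LS (fiber_subset S Y).
have [->|F0] := eqVneq (fiber S Y) set0.
  by rewrite /rho big_set0 /codim; have := inL_card_le LT YT; lia.
apply: le_trans (rho_le_codim_bigcap LF F0) (codim_le _).
by apply/bigcapsP => X; rewrite inE => /andP[].
Qed.

Lemma rho_fiber_eq {S T : cT} {Y : sT} : inL n d S -> inL n d T -> Y \in T ->
  rho d (fiber S Y) = codim Y -> fiber S Y = [set Y].
Proof.
move=> LS LT YT eq_rho; have LF := inL_subset LS (fiber_subset S Y).
have [F0|F0] := eqVneq (fiber S Y) set0.
  by move: eq_rho; rewrite F0 /rho big_set0 /codim; have := inL_card_le LT YT; lia.
have sY_cap : Y \subset \bigcap_(X in fiber S Y) X.
  by apply/bigcapsP => X; rewrite inE => /andP[].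
have [F_gt1|F_le1] := ltnP 1 #|fiber S Y|.
  have := lt_le_trans (rho_lt_codim_bigcap LF F_gt1) (codim_le sY_cap).
  by rewrite eq_rho ltxx.
have /cards1P[X FX] : #|fiber S Y| == 1%N by move: F0; rewrite -card_gt0; lia.
have /setIdP[_ sYX] : X \in fiber S Y by rewrite FX set11.
move: eq_rho; rewrite FX /rho big_set1 /codim => eq_card.
congr [set _]; apply/esym/eqP; rewrite eqEcard sYX /=.
by move: eq_card; set a := #|X|; set b := #|Y|; lia.
Qed.

(* Enlarging each member Y of K to W Y enlarges the intersection by at most
   the sum of the |W Y :\: Y|, which is exactly the decrease of rho. *)
Lemma Dd_le_widen {K : cT} {W : sT -> sT} : {in K, forall Y : sT, Y \subset W Y} ->
  Dd d K <= codim (\bigcap_(Y in K) W Y) - \sum_(Y in K) codim (W Y).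
Proof.
move=> sYW.
have sKW : \bigcap_(Y in K) Y \subset \bigcap_(Y in K) W Y.
  by apply/bigcapsP => Y YK; apply: subset_trans (sYW Y YK); apply: bigcap_inf.
have card_cap := cardsID (\bigcap_(Y in K) Y) (\bigcap_(Y in K) W Y).
rewrite (setIidPr sKW) in card_cap.
have card_diff : (#|\bigcap_(Y in K) W Y :\: \bigcap_(Y in K) Y|
                   <= \sum_(Y in K) #|W Y :\: Y|)%N.
  apply: leq_trans (card_bigcup_le K (fun Y => W Y :\: Y)).
  apply/subset_leq_card/subsetP => x.
  rewrite setDE setC_bigcap => /setIP[/bigcapP xW /bigcupP[Y YK xnY]].
  by apply/bigcupP; exists Y => //; apply/setDP; split; [apply: xW | rewrite -in_setC].
have sum_diff : (\sum_(Y in K) #|W Y :\: Y| + \sum_(Y in K) #|Y|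
                  = \sum_(Y in K) #|W Y|)%N.
  rewrite -big_split; apply: eq_bigr => Y YK /=.
  by rewrite -[in RHS](cardsID Y (W Y)) (setIidPr (sYW Y YK)) addnC.
rewrite /Dd /rho /codim !sumrB -!(big_morph Posz PoszD (erefl 0%:Z)).
move: card_cap card_diff sum_diff.
set a := #|\bigcap_(Y in K) Y|; set b := #|\bigcap_(Y in K) W Y|.
set s1 := (\sum_(Y in K) #|Y|)%N; set s2 := (\sum_(Y in K) #|W Y|)%N.
set s3 := (\sum_(Y in K) #|W Y :\: Y|)%N; set k := \sum_(Y in K) _.
lia.
Qed.

Lemma Dd_fibers_le {V K : cT} : refines V K -> below_unique V K ->
  Dd d K + \sum_(Y in K) (codim (\bigcap_(X in fiber V Y) X) - rho d (fiber V Y))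
    <= Dd d V.
Proof.
move=> VK uniqVK; pose W Y := \bigcap_(X in fiber V Y) X.
have sYW : {in K, forall Y : sT, Y \subset W Y}.
  by move=> Y _; apply/bigcapsP => X; rewrite inE => /andP[].
have sVW : \bigcap_(X in V) X \subset \bigcap_(Y in K) W Y.
  apply/bigcapsP => Y _; apply/bigcapsP => X.
  by rewrite inE => /andP[XV _]; apply: bigcap_inf.
rewrite [Dd d V]/Dd (rho_fibers VK uniqVK) sumrB -/(W _).
have := Dd_le_widen sYW; have := codim_le sVW.
set x1 := Dd d K; set x2 := codim _; set x3 := codim _.
set x4 := \sum_(Y in K) codim (W Y); set x5 := \sum_(Y in K) _.
lia.
Qed.

(* Every subfamily V of U with |V| > 1 is sorted into the fibers over the set K
   of members of T below V: if |K| > 1 then D_d(V) >= D_d(K) > 0 by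
   Dd_fibers_le, and otherwise V lies in a single fiber, which is in L(n,d). *)
Lemma inL_of_refines {T U : cT} : inL n d T ->
  {in U, forall X : sT, (#|X| <= d)%N} -> refines U T ->
  {in T, forall Y, inL n d (fiber U Y)} -> inL n d U.
Proof.
move=> LT cardU UT LfibU; apply/andP; split; last by apply/forall_inP.
apply/forallP => V; apply/implyP => /andP[sVU V_gt1].
set K := [set Y in T | fiber V Y != set0].
have sKT : K \subset T by apply/subsetP => Y; rewrite inE => /andP[].
have VK : refines V K.
  move=> X XV; have [Y YT sYX] := UT X (subsetP sVU X XV); exists Y => //.
  by rewrite inE YT; apply/set0Pn; exists X; rewrite inE XV sYX.
have [K_gt1|K_le1] := ltnP 1 #|K|.
  have uniqVK : below_unique V K.
    by apply: inL_below_unique_sub LT sKT _ => X /(subsetP sVU); apply: cardU.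
  apply: lt_le_trans (Dd_fibers_le VK uniqVK); rewrite -[0]addr0.
  apply: ltr_leD; first exact: inL_Dd_gt0 LT sKT K_gt1.
  apply: sumr_ge0 => Y; rewrite inE => /andP[YT fibV0]; rewrite subr_ge0.
  by apply: rho_le_codim_bigcap fibV0; apply: inL_subset (LfibU Y YT) (fiberS Y sVU).
have [X0 X0V] : exists X0, X0 \in V.
  by apply/set0Pn; rewrite -card_gt0; apply: ltn_trans V_gt1.
have [Y0 Y0K _] := VK X0 X0V.
have /cards1P[Y1 KY1] : #|K| == 1%N.
  have : (0 < #|K|)%N by rewrite card_gt0; apply/set0Pn; exists Y0.
  lia.
have Y1T : Y1 \in T by apply: (subsetP sKT); rewrite KY1 set11.
apply: inL_Dd_gt0 (LfibU Y1 Y1T) _ V_gt1; apply/subsetP => X XV.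
have [Y] := VK X XV; rewrite KY1 inE => /eqP-> sY1X.
by rewrite inE (subsetP sVU X XV).
Qed.

Lemma rho_lt_of_refines {S T : cT} : inL n d S -> inL n d T ->
  refines S T -> S != T -> rho d S < rho d T.
Proof.
move=> LS LT ST neqST.
have uniqST : below_unique S T.
  by apply: inL_below_unique_sub LT (subxx T) _ => X; apply: inL_card_le LS.
have [Y0 Y0T fib_neq] : exists2 Y0, Y0 \in T & fiber S Y0 != [set Y0].
  move: neqST; rewrite eqEsubset negb_and.
  case/orP=> [/subsetPn[X XS XnT] | /subsetPn[Y YT YnS]].
    have [Y YT sYX] := ST X XS; exists Y => //; apply: contraNneq XnT => fibY.
    have : X \in fiber S Y by rewrite inE XS sYX.
    by rewrite fibY inE => /eqP->.
  exists Y => //; apply: contraNneq YnS => fibY.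
  have : Y \in fiber S Y by rewrite fibY set11.
  by rewrite inE => /andP[].
rewrite (rho_fibers ST uniqST) [rho d T](bigD1 Y0 Y0T) (bigD1 Y0 Y0T) /=.
apply: ltr_leD; last by apply: ler_sum => Y /andP[YT _]; apply: rho_fiber_le LS LT YT.
rewrite lt_neqAle (rho_fiber_le LS LT Y0T) andbT.
by apply: contra fib_neq => /eqP/(rho_fiber_eq LS LT Y0T)/eqP.
Qed.

Lemma leL_refines {S T : cT} : inL n d S -> inL n d T ->
  leL d S T <-> refines S T.
Proof.
move=> LS LT; split.
  case/orP=> [/andP[_ /forall_inP ST] | /eqP->] X XS; last by exists X.
  by have /exists_inP[Y] := ST X XS; exists Y.
move=> ST; have [->|neqST] := eqVneq S T; first by rewrite /leL eqxx orbT.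
rewrite /leL /ltL (rho_lt_of_refines LS LT ST neqST); apply/orP; left.
by apply/forall_inP => X /ST[Y YT sYX]; apply/exists_inP; exists Y.
Qed.

End Codimension.

Section Splitting.
Context {n d : nat} {T : {set {set 'I_n}}} {T1 : {set 'I_n}}.
Hypotheses (LT : inL n d T) (T1T : T1 \in T).
Local Notation sT := {set 'I_n}.
Local Notation cT := {set {set 'I_n}}.

Let inL_T1 : inL n d [set T1].
Proof. by apply: inL_subset LT _; rewrite sub1set. Qed.

Let inL_TD1 : inL n d (T :\ T1).
Proof. exact: inL_subset LT (subsetDl T [set T1]). Qed.

Lemma Iset1P (S : cT) :
  S \in Iset n d [set T1] <-> inL n d S /\ {in S, forall X : sT, T1 \subset X}.
Proof.
rewrite inE; split => [/andP[LS /(leL_refines LS inL_T1) ST1] | [LS sT1S]].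
  by split=> // X /ST1[Y]; rewrite inE => /eqP->.
by rewrite LS; apply/(leL_refines LS inL_T1) => X XS; exists T1; rewrite ?set11 ?sT1S.
Qed.

Lemma IsetD1P (S : cT) : S \in Iset n d (T :\ T1) <->
  [/\ inL n d S, refines S T & {in S, forall X : sT, ~~ (T1 \subset X)}].
Proof.
rewrite inE; split => [/andP[LS /(leL_refines LS inL_TD1) ST] | [LS ST nsT1S]].
  split=> // [X /ST[Y /setD1P[_ YT] sYX] | X XS]; first by exists Y.
  have [Y /setD1P[neqYT1 YT] sYX] := ST X XS; apply: contra neqYT1 => sT1X.
  by apply/eqP; apply: inL_below_unique LT YT T1T sYX sT1X (inL_card_le LS XS).
rewrite LS; apply/(leL_refines LS inL_TD1) => X XS.
have [Y YT sYX] := ST X XS; exists Y => //; rewrite !inE YT andbT.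
by apply/eqP => eqYT1; move: (nsT1S X XS); rewrite -eqYT1 sYX.
Qed.

Lemma setU_in_Iset {S1 S2 : cT} : S1 \in Iset n d [set T1] ->
  S2 \in Iset n d (T :\ T1) -> S1 :|: S2 \in Iset n d T.
Proof.
move=> /Iset1P[LS1 sT1S1] /IsetD1P[LS2 S2T nsT1S2].
have cardU : {in S1 :|: S2, forall X : sT, (#|X| <= d)%N}.
  by move=> X /setUP[]; [apply: inL_card_le LS1 | apply: inL_card_le LS2].
have UT : refines (S1 :|: S2) T.
  by move=> X /setUP[/sT1S1 sT1X | /S2T //]; exists T1.
have LU : inL n d (S1 :|: S2).
  apply: inL_of_refines LT cardU UT _ => Y YT; have [->|neqYT1] := eqVneq Y T1.
    apply: inL_subset LS1 _; apply/subsetP => X /setIdP[/setUP[//|XS2] sT1X].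
    by move: (nsT1S2 X XS2); rewrite sT1X.
  apply: inL_subset LS2 _; apply/subsetP => X /setIdP[/setUP[XS1|//] sYX].
  move: neqYT1; rewrite (inL_below_unique LT YT T1T sYX (sT1S1 X XS1)) ?eqxx //.
  exact: inL_card_le LS1 XS1.
by rewrite inE LU; apply/(leL_refines LU LT).
Qed.

Lemma fibers_in_Iset (S : cT) : S \in Iset n d T ->
  fiber S T1 \in Iset n d [set T1] /\ cofiber S T1 \in Iset n d (T :\ T1).
Proof.
rewrite inE => /andP[LS /(leL_refines LS LT) ST]; split.
  apply/Iset1P; split; first exact: inL_subset LS (fiber_subset S T1).
  by move=> X /setIdP[].
have LS' : inL n d (cofiber S T1).
  by apply: inL_subset LS _; apply/subsetP => X /setIdP[].
by apply/IsetD1P; split=> // [X /setIdP[/ST] | X /setIdP[]].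
Qed.

Lemma fibers_setU {S1 S2 : cT} : S1 \in Iset n d [set T1] ->
  S2 \in Iset n d (T :\ T1) ->
  fiber (S1 :|: S2) T1 = S1 /\ cofiber (S1 :|: S2) T1 = S2.
Proof.
move=> /Iset1P[_ sT1S1] /IsetD1P[_ _ nsT1S2].
have S1nS2 X : X \in S1 -> X \notin S2.
  by move=> XS1; apply: contraL (sT1S1 X XS1); apply: nsT1S2.
split; apply/setP => X; rewrite !inE; case: (boolP (X \in S1)) => [XS1|XnS1] /=.
- by rewrite sT1S1.
- by case: (boolP (X \in S2)) => //= /nsT1S2/negbTE.
- by rewrite sT1S1 // (negbTE (S1nS2 X XS1)).
- by case: (boolP (X \in S2)) => //= /nsT1S2.
Qed.

Lemma leL_setU {S1 S2 R1 R2 : cT} :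
  S1 \in Iset n d [set T1] -> S2 \in Iset n d (T :\ T1) ->
  R1 \in Iset n d [set T1] -> R2 \in Iset n d (T :\ T1) ->
  leL d (S1 :|: S2) (R1 :|: R2) = leL d S1 R1 && leL d S2 R2.
Proof.
move=> SA SB RA RB.
have LU := Iset_inL (setU_in_Iset SA SB); have LU' := Iset_inL (setU_in_Iset RA RB).
move: SA SB RA RB => /Iset1P[LS1 sT1S1] /IsetD1P[LS2 _ nsT1S2].
move=> /Iset1P[LR1 sT1R1] /IsetD1P[LR2 R2T nsT1R2].
apply/idP/andP => [/(leL_refines LU LU') SR | [/(leL_refines LS1 LR1) SR1]].
  split.
    apply/(leL_refines LS1 LR1) => X XS1.
    have [Y /setUP[YR1|YR2] sYX] := SR X (subsetP (subsetUl _ _) X XS1).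
      by exists Y.
    have [Z ZT sZY] := R2T Y YR2; have sZX := subset_trans sZY sYX.
    have eqZT1 := inL_below_unique LT ZT T1T sZX (sT1S1 X XS1) (inL_card_le LS1 XS1).
    by move: (nsT1R2 Y YR2); rewrite -eqZT1 sZY.
  apply/(leL_refines LS2 LR2) => X XS2.
  have [Y /setUP[YR1|YR2] sYX] := SR X (subsetP (subsetUr _ _) X XS2); last by exists Y.
  by move: (nsT1S2 X XS2); rewrite (subset_trans (sT1R1 Y YR1) sYX).
move=> /(leL_refines LS2 LR2) SR2; apply/(leL_refines LU LU') => X.
by case/setUP => [/SR1|/SR2] [Y YR sYX]; exists Y; rewrite // inE YR ?orbT.
Qed.
End Splitting.

Theorem lemma3p6 (d n : nat) (hn : (d < n)%N) (T : {set {set 'I_n}})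
    (T1 : {set 'I_n}) :
  inL n d T -> T1 \in T ->
  poset_iso
    (setX (Iset n d [set T1]) (Iset n d (T :\ T1)))
    (prod_rel (leL d) (leL d))
    (Iset n d T) (leL d).
Proof.
move=> LT T1T; exists (fun p => p.1 :|: p.2).
exists (fun S => (fiber S T1, cofiber S T1)); split.
- by case=> S1 S2 /setXP[SA SB]; exact (setU_in_Iset LT T1T SA SB).
- by move=> S /(fibers_in_Iset LT T1T)[SA SB]; apply/setXP.
- by case=> S1 S2 /setXP[SA SB]; have [/= -> ->] := fibers_setU LT T1T SA SB.
- by move=> S _; apply: fiber_setU_cofiber.
case=> S1 S2 [R1 R2] /setXP[SA SB] /setXP[RA RB].
by rewrite (leL_setU LT T1T SA SB RA RB).
Qed.
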